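(* Let $(X,\mathcal{A},\mu,T)$ be a measure-preserving system ($\mu$ a probability measure) satisfying condition (U1). Let $\{A_n\}_{n\in\mathbb{N}}\subset\mathcal{A}$ satisfy $\sum_{n=1}^\infty\mu(A_n)=\infty$, and suppose there is a constant $C\ge1$ such that $$\sum_{\substack{n,m\in\mathbb{N}\\ n+m\le N}}\mu\big(A_m\cap T^{-n}(A_{m+n})\big)\le C\Big(\sum_{n=1}^N\mu(A_n)\Big)^2$$ for infinitely many $N\in\mathbb{N}$. Then $\mu\big(\limsup_{n\to\infty}T^{-n}(A_n)\big)=1$, i.e. for $\mu$-almost every $x\in X$ one has $T^n(x)\in A_n$ for infinitely many $n$.
   Context: Condition (U1): for every $A\in\mathcal{A}$ there exist a positive sequence $(\varepsilon_n)$ with $\varepsilon_n\to0$ and $n_0\in\mathbb{N}$ (both possibly depending on $A$) such that for all $n\ge n_0$ and all $B\in\mathcal{A}$, $\mu(A\cap T^{-n}(B))\le\mu(A)\mu(B)+\varepsilon_n\mu(B)$. *)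

From HB Require Import structures.
From mathcomp Require Import all_boot all_order all_algebra.
From mathcomp Require Import all_classical all_reals all_analysis.
Set Implicit Arguments. Unset Strict Implicit. Unset Printing Implicit Defensive.
Import Order.TTheory GRing.Theory Num.Theory.
Local Open Scope classical_set_scope.
Local Open Scope ring_scope.

Definition measure_preserving {d} {X : measurableType d} {R : realType}
  (mu : probability X R) (T : X -> X) : Prop :=
  measurable_fun setT T /\
  forall B, measurable B -> mu (T @^-1` B) = mu B.

Definition condU1 {d} {X : measurableType d} {R : realType}
  (mu : probability X R) (T : X -> X) : Prop :=
  forall A, measurable A ->
    exists eps : nat -> R, (forall n, 0 < eps n) /\ eps @ \oo --> 0 /\
    exists n0 : nat, forall n, (n0 <= n)%N -> forall B, measurable B ->
      (mu (A `&` (iter n T @^-1` B)) <= mu A * mu B + (eps n)%:E * mu B)%E.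

Definition limsup_set {X : Type} (E : nat -> set X) : set X :=
  \bigcap_k \bigcup_(n in [set n | (k <= n)%N]) E n.

From HB Require Import structures.
From mathcomp Require Import all_boot all_order all_algebra.
From mathcomp Require Import all_classical all_reals all_analysis.
From mathcomp Require Import measurable_realfun ring lra zify.
Import Order.TTheory GRing.Theory Num.Theory.
Local Open Scope classical_set_scope.
Local Open Scope ring_scope.

(* Let L be the limsup set and suppose c := mu (~` L) / 2 > 0.  Applying (U1)
   to L shows that eventually a fraction at least c of E_n := T^-n (A_n) lies
   outside L.  The Chung-Erdos second-moment inequality for the sets E_n \ L,
   k <= n <= N, whose pairwise intersections are controlled by the
   quasi-independence hypothesis once transported by T^m, then yields
   mu (\bigcup_(n >= k) E_n \ L) >= c^2 / (12 C) for every large k, whereas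
   these sets decrease to the empty set. *)

Section nat_sums.
Context {R : realFieldType}.

Lemma ler_sum_nat_subrange (f : nat -> R) {lo1 lo2 hi1 hi2 : nat} :
  (lo1 <= lo2)%N -> (hi1 <= hi2)%N -> (forall i, 0 <= f i) ->
  \sum_(lo2 <= i < hi1) f i <= \sum_(lo1 <= i < hi2) f i.
Proof.
move=> lo12 hi12 f0; rewrite -lee_fin -!sumEFin.
have f0E k : (0 <= (f k)%:E)%E by rewrite lee_fin.
apply: (@le_trans _ _ (\sum_(lo2 <= i < hi2) (f i)%:E)).
  exact: (lee_sum_nneg_natr (fun k => (f k)%:E) xpredT lo2 (fun k _ _ => f0E k)).
exact: (lee_sum_nneg_natl (fun k => (f k)%:E) xpredT hi2 (fun k _ _ => f0E k)).
Qed.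

Lemma sum_sym_split_diag (h : nat -> nat -> R) (N : nat) :
  (forall i j, h i j = h j i) ->
  \sum_(1 <= i < N.+1) \sum_(1 <= j < N.+1) h i j =
  \sum_(1 <= i < N.+1) h i i +
  2 * \sum_(1 <= i < N.+1) \sum_(1 <= j < N.+1 | (i < j)%N) h i j.
Proof.
move=> h_sym; elim: N => [|N IH]; first by rewrite !big_geq// mulr0 addr0.
rewrite big_nat_recr//= [X in _ = X + _]big_nat_recr//=.
rewrite [X in _ = _ + 2 * X]big_nat_recr//=.
have last_col : \sum_(1 <= i < N.+1) \sum_(1 <= j < N.+2) h i j =
    \sum_(1 <= i < N.+1) \sum_(1 <= j < N.+1) h i j +
    \sum_(1 <= i < N.+1) h i N.+1.
  by rewrite -big_split; apply: eq_bigr => i _; rewrite big_nat_recr.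
have last_col_triu :
    \sum_(1 <= i < N.+1) \sum_(1 <= j < N.+2 | (i < j)%N) h i j =
    \sum_(1 <= i < N.+1) \sum_(1 <= j < N.+1 | (i < j)%N) h i j +
    \sum_(1 <= i < N.+1) h i N.+1.
  rewrite -big_split; apply: eq_big_nat => i /andP[_ iN].
  by rewrite big_mkcond big_nat_recr//= -big_mkcond /= iN.
have last_row_triu : \sum_(1 <= j < N.+2 | (N.+1 < j)%N) h N.+1 j = 0.
  by rewrite big_nat_cond big1// => j /andP[/andP[_]]; rewrite ltnS leqNgt => /negbTE->.
have last_row : \sum_(1 <= j < N.+2) h N.+1 j =
    \sum_(1 <= i < N.+1) h i N.+1 + h N.+1 N.+1.
  by rewrite big_nat_recr//=; congr (_ + _); apply: eq_bigr => i _.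
rewrite last_col last_col_triu last_row_triu last_row IH addr0; lra.
Qed.

End nat_sums.

Lemma sum_pairs_shift {V : nmodType} (g : nat -> nat -> V) (N : nat) :
  \sum_(1 <= n < N.+1) \sum_(1 <= m < N.+1 | (n + m <= N)%N) g m (m + n)%N =
  \sum_(1 <= i < N.+1) \sum_(1 <= j < N.+1 | (i < j)%N) g i j.
Proof.
under eq_bigr do rewrite big_mkcond.
rewrite exchange_big /=; apply: eq_big_nat => m /andP[m1 mN]; rewrite -big_mkcond /=.
rewrite [RHS](@big_cat_nat _ _ _ m.+1)//=.
rewrite [X in _ = X + _]big_nat_cond [X in _ = X + _]big1 ?add0r; last first.
  by move=> j /andP[/andP[_ jm] mj]; exfalso; move: jm mj; lia.
rewrite -(add1n m) big_addn.
rewrite [LHS](@big_cat_nat _ _ _ (N - m).+1)//=; last by rewrite ltnS leq_subr.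
rewrite [X in _ + X = _]big_nat_cond [X in _ + X = _]big1 ?addr0; last first.
  by move=> n /andP[/andP[nm _] nmN]; exfalso; move: nm nmN; lia.
have -> : (N.+1 - m = (N - m).+1)%N by lia.
rewrite big_mkcond [RHS]big_mkcond; apply: eq_big_nat => n /andP[n1 nN].
have -> : (n + m <= N)%N by lia.
have -> : (m < n + m)%N by lia.
by rewrite addnC.
Qed.

Lemma sqr_le_mul_of_quadratic_ge (R : realFieldType) (S Q P : R) :
  0 <= S -> 0 <= P -> (forall l, 0 <= l -> 2 * l * S <= Q + l ^+ 2 * P) ->
  S ^+ 2 <= Q * P.
Proof.
move=> S0 P0 quad; have [P_eq0|P_neq0] := eqVneq P 0.
  suff -> : S = 0 by rewrite P_eq0 expr0n mulr0.
  apply/eqP; rewrite eq_le S0 andbT leNgt; apply/negP => S_gt0.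
  have := quad ((`|Q| + 1) / S) (divr_ge0 (addr_ge0 (normr_ge0 Q) ler01) S0).
  rewrite P_eq0 mulr0 addr0 -mulrA divfK ?gt_eqF //.
  by have := ler_norm Q; have := normr_ge0 Q; lra.
have P_gt0 : 0 < P by rewrite lt_def P_neq0.
have := quad (S / P) (divr_ge0 S0 P0).
rewrite -(ler_pM2r P_gt0).
have -> : (Q + (S / P) ^+ 2 * P) * P = Q * P + S ^+ 2 by field; rewrite P_neq0.
have -> : 2 * (S / P) * S * P = 2 * S ^+ 2 by field; rewrite P_neq0.
lra.
Qed.

Lemma fine_measureK {d} {X : measurableType d} {R : realType}
  (mu : {finite_measure set X -> \bar R}) {Y : set X} :
  measurable Y -> (fine (mu Y))%:E = mu Y.
Proof. by move=> mY; rewrite fineK ?fin_num_measure. Qed.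

Section second_moment.
Context {d} {X : measurableType d} {R : realType}.
Variable mu : {finite_measure set X -> \bar R}.

Lemma measurable_EFin_indic (B : set X) :
  measurable B -> measurable_fun setT (EFin \o (\1_B : X -> R)).
Proof. by move=> mB; apply/measurable_EFinP; exact: measurable_indic. Qed.

Lemma integral_sum_indic {I : Type} (s : seq I) (F : I -> set X) :
  (forall i, measurable (F i)) ->
  (\int[mu]_x (\sum_(i <- s) \1_(F i) x)%:E =
    (\sum_(i <- s) fine (mu (F i)))%:E)%E.
Proof.
move=> mF; under eq_integral do rewrite -sumEFin.
rewrite ge0_integral_sum //; last by move=> i; exact: measurable_EFin_indic.
rewrite -sumEFin; apply: eq_bigr => i _.
by rewrite integral_indic // setIT (fine_measureK mu (mF i)).
Qed.

Lemma sqr_sum_indic {I : Type} (s : seq I) (F : I -> set X) (x : X) :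
  (\sum_(i <- s) \1_(F i) x) ^+ 2 =
  \sum_(i <- s) \sum_(j <- s) (\1_(F i `&` F j) x : R).
Proof.
rewrite expr2 mulr_suml; apply: eq_bigr => i _.
by rewrite mulr_sumr; apply: eq_bigr => j _; rewrite indicI.
Qed.

Lemma integral_sqr_sum_indic {I : Type} (s : seq I) (F : I -> set X) :
  (forall i, measurable (F i)) ->
  (\int[mu]_x ((\sum_(i <- s) \1_(F i) x) ^+ 2)%:E =
    (\sum_(i <- s) \sum_(j <- s) fine (mu (F i `&` F j)))%:E)%E.
Proof.
move=> mF; under eq_integral do rewrite sqr_sum_indic -sumEFin.
rewrite ge0_integral_sum //.
- rewrite -sumEFin; apply: eq_bigr => i _.
  by apply: integral_sum_indic => j; exact: measurableI.
- move=> i; apply/measurable_EFinP; apply: measurable_sum => j.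
  exact/measurable_indic/measurableI.
- by move=> i x _; rewrite lee_fin sumr_ge0.
Qed.

(* Cauchy-Schwarz for Z = \sum_i 1_(F i) and 1_U, in the form of the
   pointwise bound 2 l Z <= Z^2 + l^2 1_U, valid because Z vanishes off U. *)
Lemma chung_erdos {I : eqType} (s : seq I) (F : I -> set X) (U : set X) :
  (forall i, measurable (F i)) -> measurable U ->
  (forall i, i \in s -> F i `<=` U) ->
  (\sum_(i <- s) fine (mu (F i))) ^+ 2 <=
  (\sum_(i <- s) \sum_(j <- s) fine (mu (F i `&` F j))) * fine (mu U).
Proof.
move=> mF mU FU; apply: sqr_le_mul_of_quadratic_ge => [||l l0].
- by apply: sumr_ge0 => i _; exact: fine_ge0.
- exact: fine_ge0.
pose Z x := \sum_(i <- s) (\1_(F i) x : R).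
have Z0 x : 0 <= Z x by exact: sumr_ge0.
have mZ : measurable_fun setT Z by apply: measurable_sum => i; exact: measurable_indic.
have Z_off_U x : ~ U x -> Z x = 0.
  move=> nUx; rewrite /Z big1_seq // => i /andP[_ si].
  by rewrite indicE memNset // => /(FU _ si).
have pointwise x : 2 * l * Z x <= Z x ^+ 2 + l ^+ 2 * \1_U x.
  have [Ux|nUx] := pselect (U x).
    by rewrite indicE mem_set // mulr1; have := sqr_ge0 (Z x - l); rewrite sqrrB; lra.
  by rewrite Z_off_U // mulr0 expr0n /= add0r mulr_ge0 ?sqr_ge0.
have mZ2 : measurable_fun setT (fun x => Z x ^+ 2) by exact: measurable_funX.
have mlU : measurable_fun setT (fun x => l ^+ 2 * \1_U x).
  by apply: measurable_funM; [exact: measurable_cst | exact: measurable_indic].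
have le_int : (\int[mu]_x (2 * l * Z x)%:E <=
               \int[mu]_x (Z x ^+ 2 + l ^+ 2 * \1_U x)%:E)%E.
  apply: ge0_le_integral => //.
  - by move=> x _; rewrite lee_fin !mulr_ge0.
  - by apply/measurable_EFinP; apply: measurable_funM => //; exact: measurable_cst.
  - by apply/measurable_EFinP; exact: measurable_funD.
  - by move=> x _; rewrite lee_fin.
have int_lhs : (\int[mu]_x (2 * l * Z x)%:E =
                (2 * l)%:E * (\sum_(i <- s) fine (mu (F i)))%:E)%E.
  under eq_integral do rewrite EFinM.
  rewrite ge0_integralZl_EFin ?mulr_ge0 //; last 2 first.
  - by move=> x _; rewrite lee_fin.
  - exact/measurable_EFinP.
  by rewrite integral_sum_indic.
have int_lU : (\int[mu]_x (l ^+ 2 * \1_U x)%:E =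
                (l ^+ 2)%:E * (fine (mu U))%:E)%E.
  under eq_integral do rewrite EFinM.
  rewrite ge0_integralZl_EFin ?sqr_ge0 //; last exact: measurable_EFin_indic.
  by rewrite integral_indic // setIT fine_measureK.
have int_rhs : (\int[mu]_x (Z x ^+ 2 + l ^+ 2 * \1_U x)%:E =
   (\sum_(i <- s) \sum_(j <- s) fine (mu (F i `&` F j)))%:E +
   (l ^+ 2)%:E * (fine (mu U))%:E)%E.
  under eq_integral do rewrite EFinD.
  rewrite ge0_integralD //; last 4 first.
  - by move=> x _; rewrite lee_fin sqr_ge0.
  - exact/measurable_EFinP.
  - by move=> x _; rewrite lee_fin mulr_ge0 ?sqr_ge0.
  - exact/measurable_EFinP.
  by rewrite integral_sqr_sum_indic // int_lU.
by move: le_int; rewrite int_lhs int_rhs -!EFinM -EFinD lee_fin.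
Qed.

End second_moment.

Lemma partial_sums_unbounded (R : realType) (f : nat -> R) :
  (forall n, 0 <= f n) -> (\sum_(1 <= n <oo) (f n)%:E = +oo)%E ->
  forall r : R, exists M : nat, r <= \sum_(1 <= n < M.+1) f n.
Proof.
move=> f0 f_div r.
have : (\sum_(1 <= n < M) (f n)%:E)%E @[M --> \oo] --> +oo%E.
  by rewrite -f_div; apply: is_cvg_nneseries => n _ _; rewrite lee_fin.
move=> /cvgeyPge/(_ r) [M _ /(_ M.+1 (leqnSn M))]; rewrite /= sumEFin lee_fin => ge_r.
exists M; apply: le_trans ge_r _.
by apply: ler_sum_nat_subrange => //; exact: leqnSn.
Qed.

Lemma cvge0_near_ge_le0 (R : realFieldType) (u : nat -> \bar R) (delta : R) :
  u @ \oo --> 0%E -> (\forall k \near \oo, (delta%:E <= u k)%E) -> delta <= 0.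
Proof. by move=> u0 /(lime_ge (cvgP _ u0)); rewrite (cvg_lim _ u0) // lee_fin. Qed.

Section measure_preserving.
Context {d} {X : measurableType d} {R : realType} {mu : probability X R} {T : X -> X}.
Hypothesis T_mp : measure_preserving mu T.

Lemma measure_preserving_iter k : measure_preserving mu (iter k T).
Proof.
have [mT muT] := T_mp; elim: k => [|k [mTk muTk]]; first by split=> //; exact: measurable_id.
split=> [|B mB]; first exact: measurableT_comp.
have mTB : measurable (T @^-1` B) by rewrite -[_ @^-1` _]setTI; exact: mT.
by transitivity (mu (T @^-1` B)); [exact: muTk | exact: muT].
Qed.

Lemma measurable_preimage_iter k {B : set X} : measurable B -> measurable (iter k T @^-1` B).
Proof.
by move=> mB; rewrite -[_ @^-1` _]setTI; apply: (measure_preserving_iter k).1.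
Qed.

Lemma measure_setI_preimage_iter (m n : nat) {A B : set X} :
  measurable A -> measurable B ->
  mu (A `&` iter n T @^-1` B) = mu (iter m T @^-1` A `&` iter (m + n) T @^-1` B).
Proof.
move=> mA mB; rewrite -(measure_preserving_iter m).2; last first.
  by apply: measurableI => //; exact: measurable_preimage_iter.
rewrite preimage_setI; congr (mu (_ `&` _)).
by apply/funext => x; rewrite /preimage /= addnC iterD.
Qed.

End measure_preserving.

Section limsup_set.
Context {d} {X : measurableType d} {R : realType}.
Context (mu : {finite_measure set X -> \bar R}) {E : nat -> set X}.
Hypothesis mE : forall n, measurable (E n).

Lemma measurable_tail_union k : measurable (\bigcup_(n in [set n | (k <= n)%N]) E n).
Proof. by apply: bigcup_measurable => n _; exact: mE. Qed.

Lemma measurable_limsup_set : measurable (limsup_set E).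
Proof. by apply: bigcapT_measurable => k; exact: measurable_tail_union. Qed.

Lemma measure_tail_union_setD_limsup_cvg0 :
  mu (\bigcup_(n in [set n | (k <= n)%N]) E n `\` limsup_set E) @[k --> \oo]
    --> 0%E.
Proof.
pose V k := \bigcup_(n in [set n | (k <= n)%N]) E n `\` limsup_set E.
have mV k : measurable (V k).
  by apply: measurableD; [exact: measurable_tail_union | exact: measurable_limsup_set].
have -> : 0%E = mu (\bigcap_k V k).
  rewrite (_ : \bigcap_k V k = set0) ?measure0 //.
  apply/seteqP; split=> x // Vx; have [_ nLx] := Vx 0%N I; apply: nLx => k _.
  by have [] := Vx k I.
apply: nonincreasing_cvg_mu.
- by rewrite ltey_eq fin_num_measure //; exact: mV.
- exact: mV.
- exact: bigcapT_measurable.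
- move=> i j ij; apply/subsetPset => x [[n /= jn En] nLx]; split=> //.
  by exists n => //=; exact: leq_trans ij jn.
Qed.

End limsup_set.

Lemma condU1_measure_setD_ge {d} {X : measurableType d} {R : realType}
    {mu : probability X R} {T : X -> X} {L : set X} {delta : R} :
  measure_preserving mu T -> condU1 mu T -> measurable L -> 0 < delta ->
  exists K : nat, forall n, (K <= n)%N -> forall B, measurable B ->
    (1 - fine (mu L) - delta) * fine (mu B) <= fine (mu (iter n T @^-1` B `\` L)).
Proof.
move=> T_mp U1 mL delta_gt0.
have [eps [eps_gt0 [eps_cvg0 [n0 U1L]]]] := U1 L mL.
have [K0 _ eps_lt] := cvgr_dist_lt _ _ eps_cvg0 _ delta_gt0.
exists (maxn n0 K0) => n; rewrite geq_max => /andP[n0n K0n] B mB.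
have mTB := measurable_preimage_iter T_mp n mB.
have decomp : mu B = (mu (iter n T @^-1` B `\` L) + mu (L `&` iter n T @^-1` B))%E.
  by rewrite -(measure_preserving_iter T_mp n).2 // setIC; exact: measureDI.
have := U1L n n0n B mB; move: decomp.
have mTBL : measurable (iter n T @^-1` B `\` L) by exact: measurableD.
have mLTB : measurable (L `&` iter n T @^-1` B) by exact: measurableI.
rewrite -(fine_measureK mu mB) -(fine_measureK mu mL) -(fine_measureK mu mTBL).
rewrite -(fine_measureK mu mLTB).
rewrite -EFinD -!EFinM -EFinD lee_fin => -[decomp] U1n.
have := eps_lt n K0n; rewrite /= sub0r normrN gtr0_norm // => eps_n_lt.
have delta_eps : 0 <= delta - eps n by rewrite subr_ge0 ltW.
have := mulr_ge0 delta_eps (fine_ge0 (measure_ge0 mu B)).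
lra.
Qed.

Lemma sum_measure_setI_le {d} {X : measurableType d} {R : realType}
    (mu : {finite_measure set X -> \bar R}) (E F : nat -> set X) (k N : nat) :
  (forall n, measurable (E n)) -> (forall n, measurable (F n)) ->
  (forall n, F n `<=` E n) -> (0 < k)%N ->
  \sum_(k <= i < N.+1) \sum_(k <= j < N.+1) fine (mu (F i `&` F j)) <=
  \sum_(1 <= n < N.+1) fine (mu (E n)) +
  2 * \sum_(1 <= n < N.+1) \sum_(1 <= m < N.+1 | (n + m <= N)%N)
        fine (mu (E m `&` E (m + n)%N)).
Proof.
move=> mE mF FE k_gt0; pose h i j := fine (mu (E i `&` E j)).
have h_ge0 i j : 0 <= h i j by exact: fine_ge0.
have FE_le i j : fine (mu (F i `&` F j)) <= h i j.
  apply: fine_le; rewrite ?fin_num_measure //; try exact: measurableI.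
  by apply: le_measure; rewrite ?inE; [exact: measurableI | exact: measurableI |
    move=> x [/FE Ex /FE Ey]].
rewrite (sum_pairs_shift h).
under [X in _ <= X + _]eq_bigr do rewrite -[E _]setIid.
rewrite -sum_sym_split_diag => [|i j]; last by rewrite /h setIC.
apply: (@le_trans _ _ (\sum_(k <= i < N.+1) \sum_(k <= j < N.+1) h i j)).
  by apply: ler_sum => i _; apply: ler_sum => j _.
apply: (@le_trans _ _ (\sum_(k <= i < N.+1) \sum_(1 <= j < N.+1) h i j)).
  by apply: ler_sum => i _; exact: ler_sum_nat_subrange.
by apply: ler_sum_nat_subrange => // i; exact: sumr_ge0.
Qed.

Section tail_lower_bound.
Context {d} {X : measurableType d} {R : realType}.
Context {mu : probability X R} {T : X -> X} {A : nat -> set X} {C : R}.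
Hypotheses (T_mp : measure_preserving mu T) (mA : forall n, measurable (A n)).
Hypothesis A_div : (\sum_(1 <= n <oo) mu (A n) = +oo)%E.
Hypothesis C_ge1 : 1 <= C.
Hypothesis corr : forall M : nat, exists N : nat, (M <= N)%N /\
  (\sum_(1 <= n < N.+1) \sum_(1 <= m < N.+1 | (n + m <= N)%N)
      mu (A m `&` (iter n T @^-1` A (m + n)%N))
   <= C%:E * (\sum_(1 <= n < N.+1) mu (A n)) ^+ 2)%E.

Let E n := iter n T @^-1` A n.
Let a n := fine (mu (A n)).

Let mE n : measurable (E n).
Proof. exact: (measurable_preimage_iter T_mp n (mA n)). Qed.

Lemma partial_sums_measure_unbounded r : exists M : nat, r <= \sum_(1 <= n < M.+1) a n.
Proof.
apply: partial_sums_unbounded => [n|]; first exact: fine_ge0.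
by rewrite -A_div; apply: eq_eseriesr => n _; rewrite fine_measureK.
Qed.

Lemma correlation_sum_le M : exists N : nat, (M <= N)%N /\
  \sum_(1 <= n < N.+1) \sum_(1 <= m < N.+1 | (n + m <= N)%N)
     fine (mu (E m `&` E (m + n)%N)) <= C * (\sum_(1 <= n < N.+1) a n) ^+ 2.
Proof.
have [N [MN corrN]] := corr M; exists N; split=> //.
have corr_fine : (\sum_(1 <= n < N.+1) \sum_(1 <= m < N.+1 | (n + m <= N)%N)
      mu (A m `&` (iter n T @^-1` A (m + n)%N)))%E =
    (\sum_(1 <= n < N.+1) \sum_(1 <= m < N.+1 | (n + m <= N)%N)
      fine (mu (E m `&` E (m + n)%N)))%:E.
  rewrite -sumEFin; apply: eq_bigr => n _; rewrite -sumEFin; apply: eq_bigr => m _.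
  rewrite (measure_setI_preimage_iter T_mp m n (mA m) (mA (m + n))).
  by rewrite fine_measureK //; exact: measurableI.
have sum_fine : (\sum_(1 <= n < N.+1) mu (A n))%E = (\sum_(1 <= n < N.+1) a n)%:E.
  by rewrite -sumEFin; apply: eq_bigr => n _; rewrite fine_measureK.
by move: corrN; rewrite corr_fine sum_fine -EFin_expe -EFinM lee_fin.
Qed.

Context {L : set X}.
Hypothesis mL : measurable L.

Lemma sqr_sum_measure_setD_le k N : (0 < k)%N ->
  (\sum_(k <= n < N.+1) fine (mu (E n `\` L))) ^+ 2 <=
  (\sum_(1 <= n < N.+1) a n +
   2 * \sum_(1 <= n < N.+1) \sum_(1 <= m < N.+1 | (n + m <= N)%N)
         fine (mu (E m `&` E (m + n)%N))) *
  fine (mu (\bigcup_(n in [set n | (k <= n)%N]) E n `\` L)).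
Proof.
move=> k_gt0; set V := _ `\` L.
have mV : measurable V by apply: measurableD => //; exact: measurable_tail_union.
have mF n : measurable (E n `\` L) by exact: measurableD.
have FV i : i \in index_iota k N.+1 -> E i `\` L `<=` V.
  by rewrite mem_index_iota => /andP[ki _] x [Eix nLx]; split=> //; exists i.
apply: le_trans (chung_erdos mu _ (fun n => E n `\` L) V mF mV FV) _.
apply: ler_wpM2r; first exact: fine_ge0.
have sum_muE : \sum_(1 <= n < N.+1) fine (mu (E n)) = \sum_(1 <= n < N.+1) a n.
  by apply: eq_bigr => n _; rewrite /E (measure_preserving_iter T_mp n).2.
rewrite -sum_muE; apply: sum_measure_setI_le => // n x; exact: proj1.
Qed.

Context {c : R} {K : nat}.
Hypothesis c_gt0 : 0 < c.
Hypothesis escape : forall n, (K <= n)%N ->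
  c * fine (mu (A n)) <= fine (mu (iter n T @^-1` A n `\` L)).

Lemma measure_tail_union_setD_ge k : (0 < k)%N -> (K <= k)%N ->
  c ^+ 2 / (12 * C) <=
  fine (mu (\bigcup_(n in [set n | (k <= n)%N]) iter n T @^-1` A n `\` L)).
Proof.
move=> k_gt0 Kk; have a_ge0 n : 0 <= a n by exact: fine_ge0.
pose T0 := \sum_(1 <= n < k) a n.
have T0_ge0 : 0 <= T0 by exact: sumr_ge0.
(* Taking SN >= 2 T0 + 1 makes SN >= 1 and the first k - 1 terms at most
   half of SN. *)
have [M SM_ge] := partial_sums_measure_unbounded (2 * T0 + 1).
have [N [MkN corrN]] := correlation_sum_le (maxn M k).
move: MkN; rewrite geq_max => /andP[MN kN].
have := sqr_sum_measure_setD_le k N k_gt0.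
set SN := \sum_(1 <= n < N.+1) a n in corrN *.
set DN := \sum_(1 <= n < N.+1) _ in corrN *.
set sig := \sum_(k <= n < N.+1) _; set u := fine _ => sig_sqr_le.
have u_ge0 : 0 <= u by exact: fine_ge0.
have SN_ge : 2 * T0 + 1 <= SN.
  by apply: le_trans SM_ge (ler_sum_nat_subrange _ (leqnn 1) _ a_ge0); rewrite ltnS.
have SN_gt0 : 0 < SN by lra.
have sig_ge : c * SN / 2 <= sig.
  have SN_split : SN = T0 + \sum_(k <= n < N.+1) a n.
    by rewrite /SN (@big_cat_nat _ _ _ k) //; exact: leqW.
  have : c * (SN - T0) <= sig.
    rewrite SN_split [T0 + _]addrC addrK mulr_sumr; apply: ler_sum_nat => n /andP[kn _].
    exact/escape/(leq_trans Kk kn).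
  have : 0 <= c * (SN / 2 - T0) by apply: mulr_ge0; [exact: ltW | lra].
  lra.
have corr_le : SN + 2 * DN <= 3 * C * SN ^+ 2.
  have : SN <= SN ^+ 2 by rewrite expr2 ler_peMl //; lra.
  have : SN ^+ 2 <= C * SN ^+ 2 by rewrite ler_peMl // sqr_ge0.
  lra.
have sq_le : c ^+ 2 / 4 * SN ^+ 2 <= 3 * C * u * SN ^+ 2.
  have -> : c ^+ 2 / 4 * SN ^+ 2 = (c * SN / 2) * (c * SN / 2) by field.
  have cSN_ge0 : 0 <= c * SN / 2 by rewrite !mulr_ge0 // ltW.
  apply: le_trans (ler_pM cSN_ge0 cSN_ge0 sig_ge sig_ge) _.
  rewrite -expr2 mulrAC; apply: le_trans sig_sqr_le _.
  exact: ler_wpM2r.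
rewrite ler_pM2r ?exprn_gt0 // in sq_le.
have C_gt0 : 0 < C by exact: lt_le_trans ltr01 C_ge1.
by rewrite ler_pdivrMr ?mulr_gt0 //; lra.
Qed.

End tail_lower_bound.

Theorem mainTheorem18 (d : measure_display) (X : measurableType d) (R : realType)
  (mu : probability X R) (T : X -> X) (A : nat -> set X) (C : R) :
  measure_preserving mu T ->
  condU1 mu T ->
  (forall n, measurable (A n)) ->
  (\sum_(1 <= n <oo) mu (A n) = +oo)%E ->
  1 <= C ->
  (forall M : nat, exists N : nat, (M <= N)%N /\
    (\sum_(1 <= n < N.+1) \sum_(1 <= m < N.+1 | (n + m <= N)%N)
        mu (A m `&` (iter n T @^-1` A (m + n)%N))
     <= C%:E * (\sum_(1 <= n < N.+1) mu (A n)) ^+ 2)%E) ->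
  mu (limsup_set (fun n => iter n T @^-1` A n)) = 1%E.
Proof.
move=> T_mp U1 mA A_div C_ge1 corr.
set E := fun n => iter n T @^-1` A n; set L := limsup_set E.
have mE n : measurable (E n) := measurable_preimage_iter T_mp n (mA n).
have mL : measurable L := measurable_limsup_set mE.
apply/eqP; rewrite eq_le probability_le1 //= -(fine_measureK mu mL) lee_fin.
rewrite leNgt; apply/negP => muL_lt1.
pose c := (1 - fine (mu L)) / 2.
have c_gt0 : 0 < c by rewrite divr_gt0 // subr_gt0.
have [K escape] := condU1_measure_setD_ge T_mp U1 mL c_gt0.
have escape_c n : (K <= n)%N -> c * fine (mu (A n)) <= fine (mu (E n `\` L)).
  move=> Kn; have := escape n Kn (A n) (mA n).
  by rewrite (_ : 1 - _ - c = c) // /c; field.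
have C_gt0 : 0 < C by exact: lt_le_trans ltr01 C_ge1.
suff : c ^+ 2 / (12 * C) <= 0.
  by rewrite leNgt => /negP; apply; apply: divr_gt0; [exact: exprn_gt0 | exact: mulr_gt0].
apply: cvge0_near_ge_le0 (measure_tail_union_setD_limsup_cvg0 mu mE) _.
exists K.+1 => // k /= Kk; rewrite -fine_measureK ?lee_fin; last first.
  by apply: measurableD => //; exact: measurable_tail_union.
apply: (measure_tail_union_setD_ge T_mp mA A_div C_ge1 corr mL c_gt0 escape_c).
  exact: leq_ltn_trans (leq0n K) Kk.
exact: ltnW.
Qed.
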